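(* Let $X$ be a regular totally Lindelöf space and $\mathcal{F}$ a filter base on $X$ stable under countable intersections. Then there is a compact set $K\subseteq X$ such that $\mathcal{F}\vee G_\delta(K):=\{F_0\cap F_1: F_0,F_1\in\mathcal{F}\cup G_\delta(K)\}$ is a total filter base stable under countable intersections that extends $\mathcal{F}$.
   Context: A filter base on $X$ is a nonempty $\mathcal{F}\subseteq\mathcal{P}(X)$ with $\emptyset\notin\mathcal{F}$ and closed under pairwise intersections; it is stable under countable intersections if for every countable $S\subseteq\mathcal{F}$ there is $H\in\mathcal{F}$ with $H\subseteq\bigcap S$. $G_\delta(K)=\{G\subseteq X: K\subseteq G,\ G\text{ is a countable intersection of open subsets of }X\}$. $ad(\mathcal{F})=\bigcap\{\overline{F}:F\in\mathcal{F}\}$; $\mathcal{F}$ is total if every filter base $\mathcal{H}\supseteq\mathcal{F}$ satisfies $ad(\mathcal{H})\neq\emptyset$. $X$ is totally Lindelöf if every filter base on $X$ stable under countable intersections is contained in a total filter base on $X$ stable under countable intersections. *)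

From HB Require Import structures.
From mathcomp Require Import all_boot all_order.
From mathcomp Require Import all_classical all_reals all_analysis.
Set Implicit Arguments. Unset Strict Implicit. Unset Printing Implicit Defensive.
Local Open Scope classical_set_scope.

Section TotallyLindelof.
Context {T : topologicalType}.

Definition tl_filter_base (F : set (set T)) : Prop :=
  F !=set0 /\ ~ F set0 /\ (forall A B, F A -> F B -> F (A `&` B)).

Definition countably_stable (F : set (set T)) : Prop :=
  forall S : set (set T), S `<=` F -> countable S ->
    exists2 H, F H & H `<=` \bigcap_(A in S) A.

Definition Gdelta (K : set T) : set (set T) :=
  [set G | K `<=` G /\ exists U : nat -> set T,
             (forall n, open (U n)) /\ G = \bigcap_n U n].

Definition adh (F : set (set T)) : set T := \bigcap_(A in F) closure A.

Definition tl_total (F : set (set T)) : Prop :=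
  forall H, tl_filter_base H -> F `<=` H -> adh H !=set0.

Definition totally_Lindelof : Prop :=
  forall F, tl_filter_base F -> countably_stable F ->
    exists H, [/\ tl_filter_base H, countably_stable H, tl_total H & F `<=` H].

Definition fjoin (F G : set (set T)) : set (set T) :=
  [set C | exists A B, [/\ (F `|` G) A, (F `|` G) B & C = A `&` B]].

End TotallyLindelof.
Arguments totally_Lindelof T : clear implicits.

From mathcomp Require Import all_boot all_order.
From mathcomp Require Import all_classical all_reals all_analysis.
Local Open Scope classical_set_scope.

(* Proof of Proposition 2.4.  Total Lindelöfness extends F to a total filter
   base H stable under countable intersections; we take K := adh H.
   - Adherence of total bases: every open set (hence, by countable stability,
     every G_delta set) containing adh H contains a member of H, and in a
     regular space adh H is compact.  Both facts come from one observation: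
     a family P compatible with a total H yields a point adherent to all
     A `&` E, A in H, E in P.
   - Compact sets: for compact K the family G_delta(K) is total, so every
     family containing it is total as well.
   - Joins: for a filter base F and a family G containing setT and closed
     under countable intersections, the members of fjoin F G are exactly
     the sets A `&` B with A in F or A = setT, and B in G.  Hence fjoin F G
     is stable under countable intersections when F is, and it is a filter
     base as soon as all members of F and G contain members of a filter
     base H.
   The theorem follows by applying the join lemmas to G := G_delta(adh H). *)

Section CountableStability.
Context {T : topologicalType}.
Implicit Types F : set (set T).

Lemma countable_enum (X : Type) (S : set X) :
  countable S -> S = set0 \/ exists e : nat -> X, S = range e.
Proof. by move=> /pfcard_geP[->|/surjfunPex[e ->]]; [left | right; exists e]. Qed.

Lemma countably_stableP F : F !=set0 ->
  countably_stable F <-> forall A : nat -> set T, (forall n, F (A n)) ->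
    exists2 B, F B & B `<=` \bigcap_n A n.
Proof.
move=> [B0 FB0]; split=> [csF A FA | seqF S SF /countable_enum[->|[e eS]]].
- have [||B FB sB] := csF (range A).
  + by move=> _ [n _ <-].
  + exact: card_le_trans (card_image_le A setT) (countableP _).
  by exists B => // x Bx n _; apply: sB => //; exists n.
- by exists B0 => // x _ A [].
- have [|B FB sB] := seqF e; first by move=> n; apply: SF; rewrite eS; exists n.
  by exists B => // x Bx A; rewrite eS => -[n _ <-]; exact: sB.
Qed.

End CountableStability.

Section GdeltaFamily.
Context {T : topologicalType}.
Implicit Types K U G : set T.

Lemma open_in_Gdelta K U : open U -> K `<=` U -> Gdelta K U.
Proof.
move=> oU KU; split => //; exists (fun=> U); split => //.
by apply/seteqP; split=> x; [move=> Ux n _ | move/(_ 0%N I)].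
Qed.

(* G_delta(K) is closed under countable intersections: the doubly indexed
   family of open sets involved is reindexed by nat through pickle. *)
Lemma Gdelta_bigcap K (W : nat -> set T) : (forall n, Gdelta K (W n)) ->
  Gdelta K (\bigcap_n W n).
Proof.
move=> hW; split; first by move=> x Kx n _; exact: (hW n).1.
have [Uf hU] := choice (fun n => (hW n).2).
pose V k := if @unpickle (nat * nat)%type k is Some p then Uf p.1 p.2 else setT.
exists V; split.
  by move=> k; rewrite /V; case: unpickle => [p|]; [exact: (hU p.1).1 | exact: openT].
apply/seteqP; split => x hx.
  move=> k _; rewrite /V; case: unpickle => [[n m]|] //=.
  by have := hx n I; rewrite (hU n).2; apply.
move=> n _; rewrite (hU n).2 => m _.
by have := hx (pickle (n, m)) I; rewrite /V pickleK.
Qed.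

End GdeltaFamily.

Section TotalFilterBases.
Context {T : topologicalType}.
Implicit Types H P : set (set T).

(* If every member of a family P (containing setT and closed under finite
   intersections) meets every member of a total filter base H, then the sets
   containing some A `&` E (A in H, E in P) form a filter base extending H;
   a point adherent to it is adherent to all the A `&` E. *)
Lemma total_join_adh H P : tl_filter_base H -> tl_total H -> P setT ->
  (forall E1 E2, P E1 -> P E2 -> P (E1 `&` E2)) ->
  (forall A E, H A -> P E -> A `&` E !=set0) ->
  exists x, forall A E, H A -> P E -> closure (A `&` E) x.
Proof.
move=> [[A0 HA0] [_ HI]] totH PT PI meet.
pose J := [set B | exists A E, [/\ H A, P E & A `&` E `<=` B]].
have fbJ : tl_filter_base J.
  split; first by exists A0, A0, setT; split=> //; rewrite setIT.
  split.
    move=> [A [E [HA PE]]]; rewrite subset0 => AE0.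
    by have [y] := meet A E HA PE; rewrite AE0.
  move=> B1 B2 [A1 [E1 [HA1 PE1 s1]]] [A2 [E2 [HA2 PE2 s2]]].
  exists (A1 `&` A2), (E1 `&` E2); split; [exact: HI | exact: PI |].
  by rewrite setIACA; apply: setISS.
have HJ : H `<=` J by move=> A HA; exists A, setT; split => //; rewrite setIT.
have [x adhx] := totH J fbJ HJ.
by exists x => A E HA PE; apply: adhx; exists A, E; split.
Qed.

(* Every open set U containing the adherence of a total filter base H contains
   a member of H: otherwise the supersets of ~` U are compatible with H, which
   produces a point of adh H adherent to the closed set ~` U. *)
Lemma adh_total_open_sub H U : tl_filter_base H -> tl_total H -> open U ->
  adh H `<=` U -> exists2 A, H A & A `<=` U.
Proof.
move=> fbH totH oU sKU; apply: contrapT => noA.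
have meet A E : H A -> ~` U `<=` E -> A `&` E !=set0.
  move=> HA sE; apply: contrapT => hAE; apply: noA; exists A => // a Aa.
  by apply: contrapT => nUa; apply: hAE; exists a; split => //; apply: sE.
have [|||x hx] := @total_join_adh H [set E | ~` U `<=` E] fbH totH => //.
  by move=> E1 E2 s1 s2 y nUy; split; [apply: s1 | apply: s2].
have [A0 HA0] := fbH.1.
have Kx : adh H x by move=> A HA; have := hx A setT HA; rewrite setIT; apply.
have cU : closure (~` U) x.
  by apply: (closureS _ (hx A0 (~` U) HA0 (@subset_refl _ _))); apply: subIsetr.
have cl : closed (~` U) by rewrite closedC.
by move: cU; rewrite -(closure_id _).1 //; apply; apply: sKU.
Qed.

Lemma adh_total_Gdelta_sub H G : tl_filter_base H -> tl_total H ->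
  countably_stable H -> Gdelta (adh H) G -> exists2 A, H A & A `<=` G.
Proof.
move=> fbH totH csH [sKG [U [oU eG]]]; rewrite eG in sKG *.
have /choice[A hA] : forall n, exists A, H A /\ A `<=` U n.
  move=> n; have [|A HA AU] := @adh_total_open_sub H (U n) fbH totH (oU n).
    by move=> x Kx; exact: sKG x Kx n I.
  by exists A.
have [B HB sB] := (countably_stableP H fbH.1).1 csH A (fun n => (hA n).1).
by exists B => // x Bx n _; apply: (hA n).2; exact: sB x Bx n I.
Qed.

(* In a regular space the adherence of a total filter base is compact: a
   proper filter G containing adh H is compatible with H (through its open
   supersets), and the resulting adherent point is a cluster point of G. *)
Lemma adh_total_compact H : regular_space T -> tl_filter_base H ->
  tl_total H -> compact (adh H).
Proof.
move=> reg fbH totH G PG GK.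
pose P := [set U | open U /\ exists2 D, G D & D `<=` U].
have [|||x hx] := @total_join_adh H P fbH totH.
- by split; [exact: openT | exists (adh H)].
- move=> E1 E2 [op1 [D1 g1 s1]] [op2 [D2 g2 s2]]; split; first exact: openI.
  by exists (D1 `&` D2); [exact: filterI | exact: setISS].
- move=> A E HA [oE [D GD DE]].
  have [k [Dk Kk]] := filter_ex (filterI GD GK).
  by apply: (Kk A HA E); apply: open_nbhs_nbhs; split => //; exact: DE.
have [A0 HA0] := fbH.1.
exists x; split.
  move=> A HA; have := hx A setT HA.
  by rewrite setIT; apply; split; [exact: openT | exists (adh H)].
(* x clusters G: if D in G missed a neighbourhood N of x, then D would lie in
   the open set ~` closure M for a closed neighbourhood M of x inside N, while
   x adheres to A0 `&` ~` closure M. *)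
move=> D N GD Nx; apply: contrapT => noDN.
have [M Mx cMN] := reg x N Nx.
have PM : P (~` closure M).
  split; first by rewrite openC; exact: closed_closure.
  by exists D => // d Dd cMd; apply: noDN; exists d; split => //; apply: cMN.
have [y [[_ nMy] My]] := hx A0 _ HA0 PM M Mx.
by apply: nMy; apply: subset_closure.
Qed.

Lemma compact_adh_meets (K : set T) H : compact K -> tl_filter_base H ->
  (forall B, H B -> closure B `&` K !=set0) -> adh H `&` K !=set0.
Proof.
move=> cK [[B0 HB0] [_ HI]] meetK.
pose G := filter_from H (fun B => closure B `&` K).
have FG : Filter G.
  apply: filter_from_filter; first by exists B0.
  move=> B1 B2 HB1 HB2; exists (B1 `&` B2); first exact: HI.
  by move=> x [/closureI[c1 c2] Kx]; split; split.
have PG : ProperFilter G by apply: filter_from_proper.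
have GK : G K by exists B0 => //; exact: subIsetr.
have [x [Kx clx]] := cK G PG GK.
exists x; split => // B HB.
have : closure (closure B `&` K) x by move=> N Nx; apply: clx => //; exists B.
move/(closureS (@subIsetl _ (closure B) K)).
by rewrite -(closure_id _).1 //; exact: closed_closure.
Qed.

(* For compact K the family G_delta(K) is total: in a filter base H
   containing G_delta(K), each member B has closure meeting K, since
   otherwise the open set ~` closure B would be a member disjoint from B. *)
Lemma compact_Gdelta_total (K : set T) : compact K -> tl_total (Gdelta K).
Proof.
move=> cK H fbH GH; have [_ [H0 HI]] := fbH.
suff meetK B : H B -> closure B `&` K !=set0.
  by have [x [adhx _]] := @compact_adh_meets K H cK fbH meetK; exists x.
move=> HB; apply: contrapT => noK.
have GnB : Gdelta K (~` closure B).
  apply: open_in_Gdelta; first by rewrite openC; exact: closed_closure.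
  by move=> k Kk cBk; apply: noK; exists k.
have := HI _ _ HB (GH _ GnB); rewrite (_ : B `&` _ = set0) //.
by rewrite -subset0 => x [Bx]; apply; exact: subset_closure.
Qed.

End TotalFilterBases.

Section Join.
Context {T : topologicalType}.
Context {F G : set (set T)}.

Lemma fjoin_subl : F `<=` fjoin F G.
Proof. by move=> A FA; exists A, A; split; [left | left | rewrite setIid]. Qed.

Lemma fjoin_subr : G `<=` fjoin F G.
Proof. by move=> A GA; exists A, A; split; [right | right | rewrite setIid]. Qed.

Hypothesis fbF : tl_filter_base F.
Hypothesis GT : G setT.
Hypothesis G_bigcap : forall W : nat -> set T, (forall n, G (W n)) ->
  G (\bigcap_n W n).

Lemma G_setI B1 B2 : G B1 -> G B2 -> G (B1 `&` B2).
Proof.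
move=> GB1 GB2; have -> : B1 `&` B2 = \bigcap_n (if n is 0 then B1 else B2).
  apply/seteqP; split=> x; first by move=> [? ?] [|n].
  by move=> h; split; [exact: (h 0%N I) | exact: (h 1%N I)].
by apply: G_bigcap => -[|n].
Qed.

Lemma fjoin_normal C : fjoin F G C <->
  exists A B, [/\ (F `|` [set setT]) A, G B & C = A `&` B].
Proof.
have [_ [_ FI]] := fbF.
split=> [[A [B [[FA|GA] [FB|GB] ->]]]|[A [B [[FA|->] GB ->]]]].
- by exists (A `&` B), setT; split; [left; exact: FI | | rewrite setIT].
- by exists A, B; split => //; left.
- by exists B, A; split => //; [left | rewrite setIC].
- by exists setT, (A `&` B); split; [right | exact: G_setI | rewrite setTI].
- by exists A, B; split; [left | right |].
- by exists B, B; split; [right | right | rewrite setTI setIid].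
Qed.

Lemma fjoin_setI C1 C2 : fjoin F G C1 -> fjoin F G C2 -> fjoin F G (C1 `&` C2).
Proof.
have [_ [_ FI]] := fbF.
have FTI A1 A2 : (F `|` [set setT]) A1 -> (F `|` [set setT]) A2 ->
    (F `|` [set setT]) (A1 `&` A2).
  by move=> [FA1|->] [FA2|->]; rewrite ?setTI ?setIT; [left; exact: FI|left|left|right].
move=> /fjoin_normal[A1 [B1 [FA1 GB1 ->]]] /fjoin_normal[A2 [B2 [FA2 GB2 ->]]].
apply/fjoin_normal; exists (A1 `&` A2), (B1 `&` B2).
by split; [exact: FTI | exact: G_setI | exact: setIACA].
Qed.

Lemma fjoin_contains C : fjoin F G C -> exists A B, [/\ F A, G B & A `&` B `<=` C].
Proof.
have [[A0 FA0] _] := fbF.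
move=> /fjoin_normal[A [B [[FA|->] GB ->]]]; first by exists A, B; split.
by exists A0, B; split => //; rewrite setTI; exact: subIsetr.
Qed.

Lemma fjoin_filter_base H : tl_filter_base H -> F `<=` H ->
  (forall B, G B -> exists2 A, H A & A `<=` B) -> tl_filter_base (fjoin F G).
Proof.
move=> [_ [H0 HI]] FH GH; have [[A0 FA0] _] := fbF.
split; first by exists A0; exact: fjoin_subl.
split; last exact: fjoin_setI.
move=> /fjoin_contains[A [B [FA GB]]]; rewrite subset0 => AB0.
have [A' HA' A'B] := GH B GB.
apply: H0; suff <- : A `&` A' = set0 by apply: HI => //; exact: FH.
by rewrite -subset0 -AB0; exact: setIS.
Qed.

(* Countable stability of F passes to the join: intersect the F-parts using
   the stability of F, and the G-parts inside G. *)
Lemma fjoin_countably_stable : countably_stable F -> countably_stable (fjoin F G).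
Proof.
have [[A0 FA0] _] := fbF.
have ne : fjoin F G !=set0 by exists A0; exact: fjoin_subl.
move=> /(countably_stableP F fbF.1) csF; apply/(countably_stableP _ ne) => C fC.
have /choice[p hp] : forall n, exists p : set T * set T,
    [/\ F p.1, G p.2 & p.1 `&` p.2 `<=` C n].
  by move=> n; have /fjoin_contains[A [B [FA GB sAB]]] := fC n; exists (A, B).
have Fp n : F (p n).1 by have [] := hp n.
have Gp n : G (p n).2 by have [] := hp n.
have [A FA sA] := csF (fun n => (p n).1) Fp.
exists (A `&` \bigcap_n (p n).2).
  apply/fjoin_normal; exists A, (\bigcap_n (p n).2).
  by split; [left | exact: G_bigcap |].
move=> x [Ax Bx] n _; have [_ _ sub] := hp n.
by apply: sub; split; [exact: sA x Ax n I | exact: Bx n I].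
Qed.

End Join.

Theorem proposition2p4 (T : topologicalType) :
  regular_space T -> totally_Lindelof T ->
  forall F : set (set T), tl_filter_base F -> countably_stable F ->
  exists K : set T, compact K /\
    [/\ tl_filter_base (fjoin F (Gdelta K)), countably_stable (fjoin F (Gdelta K)),
        tl_total (fjoin F (Gdelta K)) & (F `<=` fjoin F (Gdelta K))].
Proof.
move=> reg TL F fbF csF.
(* K is the adherence of a total countably stable extension H of F. *)
have [H [fbH csH totH FH]] := TL F fbF csF.
have cK : compact (adh H) by exact: adh_total_compact.
have GT : Gdelta (adh H) setT by exact: open_in_Gdelta openT (@subsetT _ _).
have Gcap := @Gdelta_bigcap T (adh H).
exists (adh H); split => //; split.
- apply: (fjoin_filter_base fbF GT Gcap _ fbH FH) => B.
  exact: adh_total_Gdelta_sub.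
- exact: fjoin_countably_stable.
- move=> H' fbH' sH'.
  exact: compact_Gdelta_total cK H' fbH' (subset_trans fjoin_subr sH').
- exact: fjoin_subl.
Qed.
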